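(* For $f|N$ with $(f,N/f)\mid\frac{N}{N^*}$, $q_1 | \frac{N}{f}$, $q_2 | f$, and $\chi_i$ primitive modulo $q_i$ satisfying $\chi_1 \overline{\chi_2} \sim \psi$, let \begin{equation*} D_{\chi_1, \chi_2,f}(z,s, \psi) = \sum^{*}_{u \bmod{(f, N/f)}} \chi_1(-u) E_{\frac{1}{uf}}(z,s, \psi), \end{equation*} where the sum is over representatives $u$ of $(\mathbb Z/(f,N/f)\mathbb Z)^*$ chosen coprime to $N$. Then, with $s=1/2+it$, the functions $D_{\chi_1, \chi_2, f}(z,s,\psi)$ form an orthogonal basis for $\mathcal{E}_{t,\psi}(N)$.
   Context: Let $N\ge1$, $k\in\mathbb Z$, $\psi$ a Dirichlet character modulo $N$ with $\psi(-1)=(-1)^k$, induced by a primitive character of conductor $N^*$. For $\gamma=\begin{pmatrix}a&b\\c&d\end{pmatrix}$ put $j(\gamma,z)=\frac{cz+d}{|cz+d|}$ and $\psi(\gamma)=\psi(d)$. For a cusp $\mathfrak a$ of $\Gamma=\Gamma_0(N)$ with scaling matrix $\sigma_{\mathfrak a}$ which is singular for $\psi$ (i.e. $\psi(\sigma_{\mathfrak a}\begin{pmatrix}1&1\\0&1\end{pmatrix}\sigma_{\mathfrak a}^{-1})=1$), $E_{\mathfrak a}(z,s,\psi)=\sum_{\gamma\in\Gamma_{\mathfrak a}\backslash\Gamma}\overline{\psi}(\gamma)j(\sigma_{\mathfrak a}^{-1}\gamma,z)^{-k}(\mathrm{Im}\,\sigma_{\mathfrak a}^{-1}\gamma z)^s$.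 The cusp $\frac{1}{uf}$ ($f|N$, $(u,N)=1$) is singular for $\psi$ iff $(f,N/f)\mid N/N^*$. $\chi_1\overline{\chi_2}\sim\psi$ means both are induced by the same primitive character; the principal character modulo 1 counts as primitive. $\mathcal{E}_{t,\psi}(N)=\mathrm{span}\{E_{\mathfrak a}(z,1/2+it,\psi):\mathfrak a \text{ singular for }\psi\}$, equipped with the formal inner product defined by $\frac{1}{4\pi}\langle E_{\mathfrak a}(\cdot,1/2+it,\psi),E_{\mathfrak b}(\cdot,1/2+it,\psi)\rangle_{\mathrm{Eis}}=\delta_{\mathfrak a\mathfrak b}$ (for inequivalent singular cusps), extended bilinearly; this is well defined at least for $t\neq0$, where the $E_{\mathfrak a}$ are linearly independent. *)

From mathcomp Require Import all_boot all_order all_algebra all_field.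
Set Implicit Arguments. Unset Strict Implicit. Unset Printing Implicit Defensive.
Import Order.TTheory GRing.Theory Num.Theory.
Local Open Scope ring_scope.

Definition is_dchar (q : nat) (chi : int -> algC) : Prop :=
  [/\ chi 1 = 1,
      (forall m n : int, chi (m * n) = chi m * chi n),
      (forall n : int, chi (n + q%:Z) = chi n) &
      (forall n : int, (chi n != 0) = coprimez n q%:Z)].

Definition primitive_dchar (q : nat) (chi : int -> algC) : Prop :=
  is_dchar q chi /\
  forall d : nat, (d %| q)%N -> (d < q)%N ->
    ~ (forall n : int, coprimez n q%:Z -> (n == 1 %[mod d%:Z])%Z -> chi n = 1).

Definition induced_by (N : nat) (chi chi0 : int -> algC) : Prop :=
  forall n : int, coprimez n N%:Z -> chi n = chi0 n.

(* chi1 * conj(chi2) ~ psi : both induced by the same primitive character. *)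
Definition sim_char (q1 q2 N : nat) (chi1 chi2 psi : int -> algC) : Prop :=
  exists (q0 : nat) (chi0 : int -> algC),
    [/\ primitive_dchar q0 chi0,
        induced_by (q1 * q2) (fun n => chi1 n * (chi2 n)^*) chi0 &
        induced_by N psi chi0].

(* Cusps: a pair (a, c) of coprime integers represents the cusp a/c of
   P^1(Q) (infinity = (1,0)).  Gamma_0(N) acts by linear fractional maps. *)
Definition in_Gamma0 (N : nat) (al be ga de : int) : Prop :=
  al * de - be * ga = 1 /\ (N%:Z %| ga)%Z.

Definition cusp_equiv (N : nat) (x y : int * int) : Prop :=
  exists al be ga de : int, in_Gamma0 N al be ga de /\
    y = (al * x.1 + be * x.2, ga * x.1 + de * x.2).

(* The cusp a/c is singular for psi: psi(sigma_a T sigma_a^-1) = 1.  The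
   matrix sigma_a T sigma_a^-1 is the generator of the (trace 2, parabolic)
   stabiliser of a in Gamma_0(N); since gamma |-> psi(d) is a character of
   Gamma_0(N), this is equivalent to psi(gamma) = 1 for every gamma in
   Gamma_0(N) fixing a with trace 2. *)
Definition singular_cusp (N : nat) (psi : int -> algC) (x : int * int) : Prop :=
  forall al be ga de : int, in_Gamma0 N al be ga de ->
    al + de = 2 ->
    (al * x.1 + be * x.2) * x.2 = (ga * x.1 + de * x.2) * x.1 ->
    psi de = 1.

Definition admissible (N Nstar : nat) (psi : int -> algC)
    (x : nat * (int -> algC) * (int -> algC)) : Prop :=
  let: (f, chi1, chi2) := x in
  [/\ (0 < f)%N, (f %| N)%N, (gcdn f (N %/ f) %| N %/ Nstar)%N &
      exists q1 q2 : nat,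
        [/\ (q1 %| N %/ f)%N, (q2 %| f)%N, primitive_dchar q1 chi1,
            primitive_dchar q2 chi2 & sim_char q1 q2 N chi1 chi2 psi]].

Definition reps_ok (N g : nat) (s : seq int) : Prop :=
  [/\ (forall u, u \in s -> coprimez u N%:Z),
      uniq [seq (u %% g%:Z)%Z | u <- s] &
      (forall x : int, coprimez x g%:Z ->
         exists2 u, u \in s & (u == x %[mod g%:Z])%Z)].

Definition Dser (V : lmodType algC) (E : int * int -> V) (R : nat -> seq int)
    (x : nat * (int -> algC) * (int -> algC)) : V :=
  let: (f, chi1, _) := x in
  \sum_(u <- R f) chi1 (- u) *: E (1, u * f%:Z).

Definition in_span (V : lmodType algC) (S : V -> Prop) (v : V) : Prop :=
  exists l : seq (algC * V),
    (forall p, p \in l -> S p.2) /\ v = \sum_(p <- l) p.1 *: p.2.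

From mathcomp Require Import all_boot all_order all_algebra all_field.
From mathcomp Require Import all_fingroup all_solvable all_character.
From mathcomp Require Import zify ring.
From Stdlib Require Import Classical FunctionalExtensionality.
Set Implicit Arguments. Unset Strict Implicit. Unset Printing Implicit Defensive.
Import Order.TTheory GRing.Theory Num.Theory.
Local Open Scope ring_scope.

(* The Eisenstein series at inequivalent singular cusps are orthonormal, so the
   theorem is linear algebra on coefficient vectors.  Every cusp is equivalent
   to some 1/(uf) with u among the chosen representatives, and 1/(uf) is
   singular exactly when N* divides lcm(f, N/f), i.e. (f, N/f) | N/N*.  For a
   fixed f, the coefficient vectors (chi1(-u))_u of two admissible pairs differ
   by the character chi1 conj(chi1') of (Z/(f,N/f)Z)^*: it is trivial only if
   the pairs coincide, since primitive characters are determined by their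
   values on units, and otherwise the inner product is a vanishing character
   sum.  Conversely, splitting chi* = al conj(be) along N/f and f and twisting
   by every character th of (Z/(f,N/f)Z)^* yields the admissible pairs
   (th al, th be) up to primitivity, and the orthogonality relations for the
   th invert the coefficient matrix, so each E_{1/(uf)} is a combination of
   the D. *)

(** * Integer arithmetic *)

Lemma coprimez1 (m : int) : coprimez 1 m.
Proof. by rewrite /coprimez gcd1z. Qed.

Lemma dvdz_nat (m n : nat) : (m%:Z %| n%:Z)%Z = (m %| n)%N.
Proof. by rewrite dvdzE. Qed.

Lemma coprimez_congr (m a b : int) :
  coprimez a m -> (m %| a - b)%Z -> coprimez b m.
Proof.
move=> ca /dvdzP [q hq].
have -> : b = (- q) * m + a by rewrite mulNr -hq; ring.
by rewrite /coprimez gcdzC gcdzMDl gcdzC.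
Qed.

Lemma coprimezDr (m n : int) : coprimez (n + m) m = coprimez n m.
Proof. by rewrite /coprimez gcdzC gcdzDr gcdzC. Qed.

Lemma coprimez_eqmod1 (m k : int) : (m %| k - 1)%Z -> coprimez k m.
Proof. by move=> h; apply: (coprimez_congr (coprimez1 m)); rewrite -opprB rpredN. Qed.

Lemma coprimez_dvd (a c g : int) : coprimez a c -> (g %| c)%Z -> coprimez a g.
Proof.
move=> /coprimezP [[p1 p2] /= h] /dvdzP [w hw].
by apply/coprimezP; exists (p1, p2 * w) => /=; rewrite -h hw; ring.
Qed.

Lemma chinese_gcdz (n m a b : int) : (gcdz n m %| a - b)%Z ->
  exists k, (n %| k - a)%Z /\ (m %| k - b)%Z.
Proof.
case: (Bezoutz n m) => u [v huv] /dvdzP [t ht].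
exists (a - u * n * t); split.
- have -> : a - u * n * t - a = (- (u * t)) * n by ring.
  exact: dvdz_mull (dvdzz _).
- have -> : a - u * n * t - b = (v * t) * m.
    have eab : a - b = (u * n + v * m) * t by rewrite huv mulrC.
    have -> : a - u * n * t - b = (a - b) - u * n * t by ring.
    by rewrite eab; ring.
  exact: dvdz_mull (dvdzz _).
Qed.

(* For a coprime to L, adding L times this product to a kills every common
   prime factor with N without changing a modulo L. *)
Definition coprime_shift (N : nat) (a : int) : nat :=
  \prod_(p <- primes N | ~~ (p %| `|a|)%N) p.

Lemma coprimez_shift (N L : nat) (a : int) : (0 < N)%N -> coprimez a L ->
  coprimez (a + L%:Z * (coprime_shift N a)%:Z) N.
Proof.
move=> N0 caL; set b := a + _.
rewrite /coprimez /gcdz /=; apply/eqP; apply: contraTeq isT => hg.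
set d := gcdn `|b| N in hg.
have d0 : (0 < d)%N by rewrite gcdn_gt0 N0 orbT.
have d1 : (1 < d)%N by lia.
have pp := pdiv_prime d1; set p := pdiv d in pp.
have pd : (p %| d)%N := pdiv_dvd d.
have pN : (p %| N)%N by apply: dvdn_trans pd (dvdn_gcdr _ _).
have pb : (p%:Z %| b)%Z by rewrite dvdzE /=; apply: dvdn_trans pd (dvdn_gcdl _ _).
have pprim : p \in primes N by rewrite mem_primes pp N0 pN.
case pa: (p %| `|a|)%N.
- have pL : ~~ (p %| L)%N.
    apply/negP => pL; move: caL; rewrite /coprimez /gcdz /= => /eqP [h].
    have : (p %| gcdn `|a| L)%N by rewrite dvdn_gcd pa pL.
    by rewrite h dvdn1 => /eqP p1; rewrite p1 in pp.
  have pshift : ~~ (p %| coprime_shift N a)%N.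
    rewrite /coprime_shift Euclid_dvd_prod // big1_seq // => q /andP [qa qin].
    apply/negP => pq; have qp : prime q by move: qin; rewrite mem_primes => /and3P [].
    by move: pq qa; rewrite dvdn_prime2 // => /eqP <-; rewrite pa.
  have : (p%:Z %| L%:Z * (coprime_shift N a)%:Z)%Z.
    have -> : L%:Z * (coprime_shift N a)%:Z = b - a by rewrite /b; ring.
    by apply: rpredB => //; rewrite dvdzE.
  by rewrite dvdzE abszM /= Euclid_dvdM // (negbTE pL) (negbTE pshift).
- have pshift : (p %| coprime_shift N a)%N.
    rewrite /coprime_shift -big_filter (bigD1_seq p) /=; first exact: dvdn_mulr.
      by rewrite mem_filter pa pprim.
    exact/filter_uniq/primes_uniq.
  have : (p%:Z %| a)%Z.
    have -> : a = b - L%:Z * (coprime_shift N a)%:Z by rewrite /b; ring.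
    by apply: rpredB => //; apply: dvdz_mull; rewrite dvdzE.
  by rewrite dvdzE /= pa.
Qed.

Lemma coprimez_lift (N L : nat) (a : int) : (0 < N)%N -> coprimez a L ->
  exists a', coprimez a' N /\ (L%:Z %| a' - a)%Z.
Proof.
move=> N0 caL; exists (a + L%:Z * (coprime_shift N a)%:Z).
split; first exact: coprimez_shift.
by rewrite addrAC subrr add0r dvdz_mulr.
Qed.

(** * Dirichlet characters *)

Section DirichletCharacter.
Variables (q : nat) (chi : int -> algC).
Hypothesis chiP : is_dchar q chi.

Lemma dchar1 : chi 1 = 1. Proof. by case: chiP. Qed.
Lemma dcharM m n : chi (m * n) = chi m * chi n. Proof. by case: chiP. Qed.
Lemma dchar_neq0 n : (chi n != 0) = coprimez n q%:Z. Proof. by case: chiP. Qed.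

Lemma dchar0 n : ~~ coprimez n q%:Z -> chi n = 0.
Proof. by rewrite -dchar_neq0 negbK => /eqP. Qed.

Lemma dcharDmul (n t : int) : chi (n + q%:Z * t) = chi n.
Proof.
have hD m k : chi (m + q%:Z * k%:Z) = chi m.
  elim: k => [|k IH]; first by rewrite mulr0 addr0.
  have [_ _ hper _] := chiP.
  by rewrite -addn1 PoszD mulrDr mulr1 addrA hper IH.
case: t => k; first exact: hD.
rewrite -(hD (n + q%:Z * Negz k) k.+1); congr chi; rewrite NegzE; ring.
Qed.

Lemma dchar_eqmod (a b : int) : (q%:Z %| a - b)%Z -> chi a = chi b.
Proof.
move=> /dvdzP [t ht].
have -> : a = b + q%:Z * t by rewrite mulrC -ht; ring.
exact: dcharDmul.
Qed.

Lemma dcharX n k : chi (n ^+ k) = chi n ^+ k.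
Proof. by elim: k => [|k IH]; rewrite ?expr0 ?dchar1 // !exprS dcharM IH. Qed.

(* chi n is a root of unity of order dividing 2 * totient q. *)
Lemma dchar_mul_conj1 (n : int) : (0 < q)%N -> coprimez n q%:Z -> chi n * (chi n)^* = 1.
Proof.
move=> q0 cn; set k := totient q.
have k0 : (0 < k)%N by rewrite totient_gt0.
have h1 : chi `|n|%N ^+ k = 1.
  rewrite -dcharX -dchar1; apply: dchar_eqmod.
  have -> : `|n|%N%:Z ^+ k = (`|n| ^ k)%N%:Z by rewrite -!natz natrX.
  rewrite -eqz_mod_dvd !modz_nat; apply/eqP; congr Posz.
  by apply: Euler_exp_totient; move: cn; rewrite coprimezE.
have hs : chi ((-1) ^+ (n < 0)%R) ^+ 2 = 1.
  by rewrite -dcharX -exprM mulnC exprM sqrrN expr1n dchar1.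
have hz : chi n ^+ (2 * k) = 1.
  by rewrite {1}[n]intEsign dcharM exprMn exprM hs expr1n mul1r mulnC exprM h1 expr1n.
have : `|chi n| ^+ (2 * k) == 1 by rewrite -normrX hz normr1.
by rewrite pexpr_eq1 ?muln_gt0 // => /eqP hn; rewrite -normCK hn expr1n.
Qed.

End DirichletCharacter.

Lemma dchar_mul_conj1_dvd (N q : nat) chi n : (0 < N)%N -> (q %| N)%N -> is_dchar q chi ->
  coprimez n N%:Z -> chi n * (chi n)^* = 1.
Proof.
move=> N0 qN hc cn; apply: (dchar_mul_conj1 hc); first exact: dvdn_gt0 N0 qN.
exact: coprimez_dvdr qN cn.
Qed.

Lemma dchar_neq0_dvd (N q : nat) chi n : (q %| N)%N -> is_dchar q chi ->
  coprimez n N%:Z -> chi n != 0.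
Proof. by move=> qN hc cn; rewrite (dchar_neq0 hc); apply: coprimez_dvdr qN cn. Qed.

Lemma dchar_conjC q chi : is_dchar q chi -> is_dchar q (fun n => (chi n)^*).
Proof.
case=> h1 hM hD h0; split=> [|m n|n|n]; rewrite ?h1 ?conjC1 //.
- by rewrite hM rmorphM.
- by rewrite hD.
- by rewrite conjC_eq0 h0.
Qed.

Lemma dchar_mul_restrict (Q q1 q2 : nat) c1 c2 : is_dchar q1 c1 -> is_dchar q2 c2 ->
  (q1 %| Q)%N -> (q2 %| Q)%N ->
  is_dchar Q (fun n => if coprimez n Q%:Z then c1 n * c2 n else 0).
Proof.
move=> h1 h2 d1 d2; split.
- by rewrite coprimez1 (dchar1 h1) (dchar1 h2) mulr1.
- move=> m n; rewrite coprimezMl.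
  case: (coprimez m Q%:Z); case: (coprimez n Q%:Z); rewrite /= ?mul0r ?mulr0 //.
  rewrite (dcharM h1) (dcharM h2); ring.
- move=> n; rewrite coprimezDr; case: (coprimez n Q%:Z) => //.
  have hQ : (Q%:Z %| n + Q%:Z - n)%Z by rewrite addrAC subrr add0r.
  by rewrite (dchar_eqmod h1 (dvdz_trans _ hQ)) ?(dchar_eqmod h2 (dvdz_trans _ hQ)) ?dvdzE.
- move=> n; case cn: (coprimez n Q%:Z); last by rewrite eqxx.
  by rewrite mulf_neq0 // ?(dchar_neq0 h1) ?(dchar_neq0 h2); apply: coprimez_dvdr cn.
Qed.

Lemma dchar_mul_conjC (q1 q2 : nat) c1 c2 : is_dchar q1 c1 -> is_dchar q2 c2 ->
  is_dchar (q1 * q2) (fun n => c1 n * (c2 n)^*).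
Proof.
move=> h1 h2; split.
- by rewrite (dchar1 h1) (dchar1 h2) conjC1 mulr1.
- by move=> m n; rewrite (dcharM h1) (dcharM h2) rmorphM; ring.
- move=> n; rewrite (dchar_eqmod h1 (b := n)) ?(dchar_eqmod h2 (b := n)) //.
  + by rewrite addrAC subrr add0r PoszM dvdz_mull.
  + by rewrite addrAC subrr add0r PoszM dvdz_mulr.
- by move=> n; rewrite PoszM coprimezMr mulf_eq0 conjC_eq0 negb_or !(dchar_neq0 h1, dchar_neq0 h2).
Qed.

Lemma primitive_dchar_conductor_dvd (q m N : nat) chi : (0 < q)%N -> (0 < N)%N ->
  primitive_dchar q chi ->
  (forall n, coprimez n N%:Z -> (m%:Z %| n - 1)%Z -> chi n = 1) -> (q %| m)%N.
Proof.
move=> q0 N0 [hc hprim] htriv; set d := gcdn q m.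
have [lt|ge] := ltnP d q; last first.
  have <- : d = q by apply/eqP; rewrite eqn_leq ge dvdn_leq ?dvdn_gcdl.
  exact: dvdn_gcdr.
exfalso; apply: (hprim d (dvdn_gcdl _ _) lt) => n cn; rewrite eqz_mod_dvd => hn.
have [k [hkq hkm]] := chinese_gcdz (n := q%:Z) (m := m%:Z) hn.
have ck : coprimez k (q * m)%N%:Z.
  rewrite PoszM coprimezMr (coprimez_eqmod1 hkm) andbT.
  by apply: (coprimez_congr cn); rewrite -opprB rpredN.
have [k' [ck' hk']] := coprimez_lift N0 ck.
have -> : chi n = chi k'.
  apply: (dchar_eqmod hc).
  have -> : n - k' = - (k - n) - (k' - k) by ring.
  by rewrite rpredB ?rpredN //; apply: dvdz_trans hk'; rewrite PoszM dvdz_mulr.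
apply: htriv => //.
have -> : k' - 1 = (k' - k) + (k - 1) by ring.
by rewrite rpredD //; apply: dvdz_trans hk'; rewrite PoszM dvdz_mull.
Qed.

Lemma primitive_dchar_unique (N q q' : nat) chi chi' : (0 < N)%N ->
  (q %| N)%N -> (q' %| N)%N -> primitive_dchar q chi -> primitive_dchar q' chi' ->
  (forall n, coprimez n N%:Z -> chi n = chi' n) -> q = q' /\ chi =1 chi'.
Proof.
move=> N0 qN q'N hp hp' heq; have hc := hp.1; have hc' := hp'.1.
have d1 : (q %| q')%N.
  apply: (primitive_dchar_conductor_dvd (dvdn_gt0 N0 qN) N0 hp) => n cn hn.
  by rewrite heq // -(dchar1 hc'); apply: (dchar_eqmod hc').
have d2 : (q' %| q)%N.
  apply: (primitive_dchar_conductor_dvd (dvdn_gt0 N0 q'N) N0 hp') => n cn hn.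
  by rewrite -heq // -(dchar1 hc); apply: (dchar_eqmod hc).
have eq : q = q' by apply/eqP; rewrite eqn_dvd d1 d2.
split => // n; case cn: (coprimez n q%:Z); last first.
  by rewrite (dchar0 hc) ?cn // (dchar0 hc') // -eq cn.
have [n' [cn' hn']] := coprimez_lift N0 cn.
rewrite -(dchar_eqmod hc hn') heq //; apply: (dchar_eqmod hc'); by rewrite -eq.
Qed.

Section InducedCharacter.
Variables (Q : nat) (phi : int -> algC).
Hypotheses (Q0 : (0 < Q)%N) (phiP : is_dchar Q phi).

Definition trivial_mod (d : nat) :=
  forall n, coprimez n Q%:Z -> (d%:Z %| n - 1)%Z -> phi n = 1.

(* For d | Q and phi trivial mod d, phi descends to a character modulo d,
   evaluated at a lift of n coprime to Q. *)
Definition descend (d : nat) (n : int) : algC :=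
  if coprimez n d%:Z then phi (n + d%:Z * (coprime_shift Q n)%:Z) else 0.

Variable d : nat.
Hypotheses (dQ : (d %| Q)%N) (phi_triv : trivial_mod d).

Lemma trivial_mod_eqmod a b : coprimez a Q%:Z -> coprimez b Q%:Z ->
  (d%:Z %| a - b)%Z -> phi a = phi b.
Proof.
move=> ca cb hab; have /coprimezP [[u v] /= huv] := cb.
have cu : coprimez u Q%:Z by apply/coprimezP; exists (b, v); rewrite /= mulrC.
have dQz : (d%:Z %| Q%:Z)%Z by rewrite dvdzE.
have h1 : phi (a * u) = 1.
  apply: phi_triv; first by rewrite coprimezMl ca cu.
  have -> : a * u - 1 = (a - b) * u + (- v) * Q%:Z by rewrite -huv; ring.
  by apply: rpredD; [apply: dvdz_mulr | apply: dvdz_mull].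
have h2 : phi (b * u) = 1.
  apply: phi_triv; first by rewrite coprimezMl cb cu.
  have -> : b * u - 1 = (- v) * Q%:Z by rewrite -huv; ring.
  exact: dvdz_mull.
have nz : phi u != 0 by rewrite (dchar_neq0 phiP).
by apply: (mulIf nz); rewrite -!(dcharM phiP) h1 h2.
Qed.

Lemma descend_lift n' n : coprimez n' Q%:Z -> (d%:Z %| n' - n)%Z -> descend d n = phi n'.
Proof.
move=> cn' hd.
have cnd : coprimez n d%:Z by apply: (coprimez_congr (coprimez_dvdr dQ cn')).
rewrite /descend cnd; apply: trivial_mod_eqmod => //; first exact: coprimez_shift.
have -> : n + d%:Z * (coprime_shift Q n)%:Z - n' = - (n' - n) + d%:Z * (coprime_shift Q n)%:Z
  by ring.
by apply: rpredD; rewrite ?rpredN ?dvdz_mulr.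
Qed.

Lemma descend_coprime n : coprimez n Q%:Z -> descend d n = phi n.
Proof. by move=> cn; apply: descend_lift; rewrite ?subrr ?dvdz0. Qed.

Lemma descend_dchar : is_dchar d (descend d).
Proof.
have lift n : coprimez n d%:Z -> exists2 n', coprimez n' Q%:Z & (d%:Z %| n' - n)%Z.
  by move=> cn; have [n' []] := coprimez_lift Q0 cn; exists n'.
split.
- by rewrite (@descend_lift 1) ?(dchar1 phiP) ?coprimez1 ?subrr ?dvdz0.
- move=> m n.
  case cm: (coprimez m d%:Z); last by rewrite /descend coprimezMl cm /= mul0r.
  case cn: (coprimez n d%:Z); last by rewrite /descend coprimezMl cn andbF /= mulr0.
  have [m' cm' hm] := lift _ cm; have [n' cn' hn] := lift _ cn.
  rewrite (descend_lift cm' hm) (descend_lift cn' hn) (@descend_lift (m' * n')).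
  + exact: (dcharM phiP).
  + by rewrite coprimezMl cm' cn'.
  + have -> : m' * n' - m * n = (m' - m) * n' + m * (n' - n) by ring.
    by apply: rpredD; [apply: dvdz_mulr | apply: dvdz_mull].
- move=> n; case cn: (coprimez n d%:Z); last by rewrite /descend coprimezDr cn.
  have [n' cn' hn] := lift _ cn.
  rewrite (descend_lift cn' hn) (@descend_lift n') //.
  have -> : n' - (n + d%:Z) = (n' - n) - d%:Z by ring.
  by rewrite rpredB.
- move=> n; case cn: (coprimez n d%:Z); last by rewrite /descend cn eqxx.
  by have [n' cn' hn] := lift _ cn; rewrite (descend_lift cn' hn) (dchar_neq0 phiP).
Qed.

End InducedCharacter.

(* Descend to the least modulus of triviality, which is then primitive. *)
Lemma primitive_dchar_exists (Q : nat) phi : (0 < Q)%N -> is_dchar Q phi ->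
  exists q chi, [/\ (q %| Q)%N, primitive_dchar q chi &
                    forall n, coprimez n Q%:Z -> chi n = phi n].
Proof.
move=> Q0 phiP.
suff : forall d, (d %| Q)%N -> trivial_mod Q phi d -> exists q chi,
    [/\ (q %| Q)%N, primitive_dchar q chi & forall n, coprimez n Q%:Z -> chi n = phi n].
  by apply=> // n cn hn; rewrite -(dchar1 phiP); apply: (dchar_eqmod phiP).
elim/ltn_ind => d IH dQ htr.
have hc := descend_dchar Q0 phiP dQ htr.
have [hp|hp] := classic (primitive_dchar d (descend Q phi d)).
  by exists d, (descend Q phi d); split => // n; apply: descend_coprime.
have [d' [d'd d'lt htr']] : exists d', [/\ (d' %| d)%N, (d' < d)%N &
    forall n : int, coprimez n d%:Z -> (n == 1 %[mod d'%:Z])%Z -> descend Q phi d n = 1].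
  apply: NNPP => hn; apply: hp; split => // d' h1 h2 h3; apply: hn; by exists d'.
apply: (IH d' d'lt); first exact: dvdn_trans dQ.
move=> n cn hn; rewrite -(descend_coprime Q0 phiP dQ htr cn).
by apply: htr'; rewrite ?eqz_mod_dvd //; apply: coprimez_dvdr dQ cn.
Qed.

(** * Cusps of Gamma_0(N) *)

Lemma dvdn_lcm_divn (N f Nstar : nat) : (0 < N)%N -> (f %| N)%N -> (Nstar %| N)%N ->
  (Nstar %| lcmn f (N %/ f))%N = (gcdn f (N %/ f) %| N %/ Nstar)%N.
Proof.
move=> N0 fN sN; set L := lcmn _ _; set g := gcdn _ _.
have g0 : (0 < g)%N by rewrite gcdn_gt0 (dvdn_gt0 N0 fN).
have eN : (L * g)%N = N by rewrite muln_lcm_gcd mulnC divnK.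
by rewrite dvdn_divRL // mulnC -eN dvdn_pmul2r.
Qed.

Lemma det1_coprimez (al be ga de : int) (N : nat) :
  al * de - be * ga = 1 -> (N%:Z %| ga)%Z -> coprimez de N%:Z.
Proof.
move=> hdet /dvdzP [k hk]; apply/coprimezP; exists (al, - be * k) => /=.
by rewrite -hdet hk; ring.
Qed.

(* A parabolic matrix fixing 1/c is [[1 - be c, be], [- be c^2, 1 + be c]]. *)
Lemma parabolic_stabilizer (al be ga de c : int) :
  al * de - be * ga = 1 -> al + de = 2 ->
  (al * 1 + be * c) * c = (ga * 1 + de * c) * 1 ->
  de = 1 + be * c /\ ga = - be * c ^+ 2.
Proof.
move=> hdet htr hfix.
have e1 : al = 2 - de by rewrite -htr; ring.
have e2 : ga = (al + be * c) * c - de * c by rewrite mulr1 in hfix; rewrite hfix; ring.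
have h : (de - 1 - be * c) ^+ 2 = - (al * de - be * ga - 1) by rewrite e2 e1; ring.
move: h; rewrite hdet subrr oppr0 => /eqP; rewrite sqrf_eq0 => /eqP h0.
have ede : de = 1 + be * c by rewrite -[de]subr0 -h0; ring.
by split => //; rewrite e2 e1 ede; ring.
Qed.

Section SingularCusps.
Variables (N Nstar f : nat) (psi chistar : int -> algC) (u : int).
Hypotheses (N0 : (0 < N)%N) (fN : (f %| N)%N) (sN : (Nstar %| N)%N).
Hypotheses (ind : induced_by N psi chistar) (cu : coprimez u N%:Z).

Lemma singular_cusp_of_gcd_dvd : is_dchar Nstar chistar ->
  (gcdn f (N %/ f) %| N %/ Nstar)%N -> singular_cusp N psi (1, u * f%:Z).
Proof.
move=> hcs hg al be ga de [hdet hN] htr /= hfix.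
have [ede ega] := parabolic_stabilizer hdet htr hfix.
rewrite ind ?(det1_coprimez hdet hN) // -(dchar1 hcs); apply: (dchar_eqmod hcs).
have -> : de - 1 = (be * f%:Z) * u by rewrite ede; ring.
apply: dvdz_mulr; apply: (dvdz_trans (n := (lcmn f (N %/ f))%:Z)).
  by rewrite dvdzE /= dvdn_lcm_divn.
rewrite dvdz_lcm dvdz_mull ?dvdzz //=.
have hN' : (N%:Z %| u ^+ 2 * (be * f%:Z * f%:Z))%Z.
  have -> : u ^+ 2 * (be * f%:Z * f%:Z) = - ga by rewrite ega; ring.
  by rewrite rpredN.
rewrite Gauss_dvdzr in hN'; last by rewrite coprimez_sym coprimezXl.
by move: hN'; rewrite -{1}(divnK fN) PoszM dvdz_mul2r // eqz_nat -lt0n (dvdn_gt0 N0 fN).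
Qed.

(* Conversely, the parabolic elements fixing 1/(uf) reach every
   n = 1 mod lcm(f, N/f), so chistar must be trivial there. *)
Lemma gcd_dvd_of_singular_cusp : is_dchar N psi -> primitive_dchar Nstar chistar ->
  singular_cusp N psi (1, u * f%:Z) -> (gcdn f (N %/ f) %| N %/ Nstar)%N.
Proof.
move=> hpsi hstar hsing; rewrite -dvdn_lcm_divn //; set L := lcmn f (N %/ f).
apply: (primitive_dchar_conductor_dvd (dvdn_gt0 N0 sN) N0 hstar) => n cn /dvdzP [k hk].
have /coprimezP [[ub vb] /= huv] := cu.
set t0 := (L %/ f)%N; have eL : (t0 * f)%N = L by rewrite divnK ?dvdn_lcml.
set be := ub * k * t0%:Z.
have NLf : (N%:Z %| L%:Z * f%:Z)%Z.
  rewrite -PoszM dvdzE /= -{1}(divnK fN) dvdn_pmul2r ?dvdn_lcmr //.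
  exact: dvdn_gt0 N0 fN.
have h1 : psi (1 + be * (u * f%:Z)) = 1.
  apply: (hsing (1 - be * (u * f%:Z)) be (- be * (u * f%:Z) ^+ 2)); rewrite /=; try ring.
  split; first by ring.
  have -> : - be * (u * f%:Z) ^+ 2 = (- (k * u * (ub * u))) * (L%:Z * f%:Z).
    by rewrite /be -eL PoszM; ring.
  exact: dvdz_mull.
rewrite -ind // -h1; apply: (dchar_eqmod hpsi).
have -> : n - (1 + be * (u * f%:Z)) = (k * L%:Z * vb) * N%:Z.
  have -> : n = k * L%:Z + 1 by rewrite -hk; ring.
  have e1 : ub * u = 1 - vb * N%:Z by rewrite -huv; ring.
  have -> : be * (u * f%:Z) = k * (ub * u) * (t0%:Z * f%:Z) by rewrite /be; ring.
  by rewrite e1 -PoszM eL; ring.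
exact: dvdz_mull (dvdzz _).
Qed.

End SingularCusps.

(* Conjugating the stabiliser of y by the matrix carrying x to y. *)
Lemma singular_cusp_equiv (N : nat) (psi : int -> algC) (x y : int * int) :
  is_dchar N psi -> cusp_equiv N x y -> singular_cusp N psi y -> singular_cusp N psi x.
Proof.
move=> hpsi [a [b [c [d [[hdg hNc] hy]]]]] hsy al be ga de [hdet hNga] htr hfix.
case: x hy hfix => x1 x2 hy /= hfix.
pose al' := (a * al + b * ga) * d - (a * be + b * de) * c.
pose be' := - (a * al + b * ga) * b + (a * be + b * de) * a.
pose ga' := (c * al + d * ga) * d - (c * be + d * de) * c.
pose de' := - (c * al + d * ga) * b + (c * be + d * de) * a.
have h1 : in_Gamma0 N al' be' ga' de'.
  split.
  - have -> : al' * de' - be' * ga' = (a * d - b * c) ^+ 2 * (al * de - be * ga).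
      by rewrite /al' /be' /ga' /de'; ring.
    by rewrite hdg hdet; ring.
  - have -> : ga' = c * (d * al - c * be - d * de) + ga * (d * d) by rewrite /ga'; ring.
    by apply: rpredD; apply: dvdz_mulr.
have h2 : al' + de' = 2.
  have -> : al' + de' = (a * d - b * c) * (al + de) by rewrite /al' /de'; ring.
  by rewrite hdg htr mul1r.
have h3 : (al' * y.1 + be' * y.2) * y.2 = (ga' * y.1 + de' * y.2) * y.1.
  rewrite hy /=; apply/eqP; rewrite -subr_eq0; apply/eqP.
  have -> : (al' * (a * x1 + b * x2) + be' * (c * x1 + d * x2)) * (c * x1 + d * x2) -
    (ga' * (a * x1 + b * x2) + de' * (c * x1 + d * x2)) * (a * x1 + b * x2)
    = (a * d - b * c) ^+ 2 * ((al * x1 + be * x2) * x2 - (ga * x1 + de * x2) * x1).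
    by rewrite /al' /be' /ga' /de'; ring.
  by rewrite hfix subrr mulr0.
rewrite -(hsy al' be' ga' de' h1 h2 h3); apply: (dchar_eqmod hpsi).
have -> : de - de' = de * (1 - (a * d - b * c)) + c * (b * al - a * be - b * de) + ga * (d * b).
  by rewrite /de'; ring.
by rewrite hdg subrr mulr0 add0r; apply: rpredD; apply: dvdz_mulr.
Qed.

Lemma cusp_equiv_inv (N f f' : nat) (u v : int) : (0 < N)%N -> (f %| N)%N -> (f' %| N)%N ->
  coprimez u N%:Z -> coprimez v N%:Z -> cusp_equiv N (1, u * f%:Z) (1, v * f'%:Z) ->
  f = f' /\ ((gcdn f (N %/ f))%:Z %| v - u)%Z.
Proof.
move=> N0 fN f'N cu cv [al [be [ga [de [[hdet hN] /= [e1 e2]]]]]].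
have cde := det1_coprimez hdet hN.
have fNz : (f%:Z %| N%:Z)%Z by rewrite dvdzE.
have f'Nz : (f'%:Z %| N%:Z)%Z by rewrite dvdzE.
have d1 : (f %| f')%N.
  rewrite -dvdz_nat -(@Gauss_dvdzr _ v); last by rewrite coprimez_sym; apply: coprimez_dvdr cv.
  rewrite e2 mulr1; apply: rpredD; first exact: dvdz_trans fNz hN.
  by apply: dvdz_mull; apply: dvdz_mull; apply: dvdzz.
have d2 : (f' %| f)%N.
  rewrite -dvdz_nat -(@Gauss_dvdzr _ (de * u)); last first.
    by rewrite coprimez_sym coprimezMl !(coprimez_dvdr f'N).
  have -> : de * u * f%:Z = v * f'%:Z - ga by rewrite e2; ring.
  by apply: rpredB; [apply: dvdz_mull (dvdzz _) | apply: dvdz_trans f'Nz hN].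
have eff : f = f' by apply/eqP; rewrite eqn_dvd d1 d2.
split => //; subst f'; set g := gcdn f (N %/ f).
have gM : (g%:Z %| (N %/ f)%N%:Z)%Z by rewrite dvdzE dvdn_gcdr.
have gN : (g%:Z %| N%:Z)%Z by apply: dvdz_trans fNz; rewrite dvdzE dvdn_gcdl.
have hM : ((N %/ f)%N%:Z %| v - de * u)%Z.
  rewrite -(@dvdz_mul2r f%:Z) ?eqz_nat -?lt0n ?(dvdn_gt0 N0 fN) // -PoszM divnK //.
  have -> : (v - de * u) * f%:Z = ga by rewrite mulr1 in e2; rewrite mulrBl e2; ring.
  exact: hN.
have hde : (g%:Z %| de - 1)%Z.
  have -> : de - 1 = (de * be * u) * f%:Z + be * ga.
    have e1' : al = 1 - be * (u * f%:Z) by rewrite e1; ring.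
    by rewrite -hdet e1'; ring.
  apply: rpredD; first by apply: dvdz_mull; rewrite dvdzE dvdn_gcdl.
  exact: dvdz_mull (dvdz_trans gN hN).
have -> : v - u = (v - de * u) + u * (de - 1) by ring.
by apply: rpredD; [apply: dvdz_trans gM hM | apply: dvdz_mull].
Qed.

Lemma cusp_equiv_of_congr (N f : nat) (a c1 u : int) : (0 < N)%N -> (f %| N)%N ->
  coprimez a (c1 * f%:Z) -> coprimez c1 (N %/ f)%N%:Z -> coprimez u (N %/ f)%N%:Z ->
  ((gcdn f (N %/ f))%:Z %| u - c1 * a)%Z -> cusp_equiv N (1, u * f%:Z) (a, c1 * f%:Z).
Proof.
move=> N0 fN cac cc1 cuM hu; set M := (N %/ f)%N; set g := gcdn f M.
have eN : (M * f)%N = N by rewrite divnK.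
have /coprimezP [[ub vb] /= huv] := cuM.
have e1 : ub * u = 1 - vb * M%:Z by rewrite -huv; ring.
have /coprimezP [[de0 p2] /= hb] := cac; set be0 := - p2.
have hb' : de0 * a - be0 * (c1 * f%:Z) = 1 by rewrite /be0 -hb; ring.
have hg : (gcdz (c1 * f%:Z) M%:Z %| de0 - c1 * ub)%Z.
  rewrite gcdzC Gauss_gcdzr 1?coprimez_sym // gcdzC.
  rewrite -(@Gauss_dvdzr _ u); last first.
    by rewrite coprimez_sym; apply: (coprimez_dvd cuM); rewrite dvdz_nat dvdn_gcdr.
  have -> : u * (de0 - c1 * ub) = (u - c1 * a) * de0 + (c1 * be0 * c1) * f%:Z + c1 * vb * M%:Z.
    have e2 : de0 * a = 1 + be0 * (c1 * f%:Z) by rewrite -hb'; ring.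
    have -> : u * (de0 - c1 * ub) = u * de0 - c1 * (ub * u) by ring.
    have -> : (u - c1 * a) * de0 = u * de0 - c1 * (de0 * a) by ring.
    by rewrite e1 e2; ring.
  apply: rpredD; first apply: rpredD.
  - exact: dvdz_mulr.
  - by apply: dvdz_mull; rewrite dvdz_nat dvdn_gcdl.
  - by apply: dvdz_mull; rewrite dvdz_nat dvdn_gcdr.
have [k [hk1 hk2]] := chinese_gcdz hg.
have /dvdzP [t ht] := hk1.
set be := be0 + a * t.
exists (a - u * f%:Z * be), be, (c1 * f%:Z - u * f%:Z * k), k; split; last first.
  by rewrite /=; congr pair; ring.
split.
- have -> : k = de0 + t * (c1 * f%:Z) by rewrite -ht; ring.
  by rewrite /be -hb'; ring.
- have -> : c1 * f%:Z - u * f%:Z * k = (c1 - u * k) * f%:Z by ring.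
  rewrite -eN PoszM dvdz_mul2r ?eqz_nat -?lt0n ?(dvdn_gt0 N0 fN) //.
  have -> : c1 - u * k = c1 * vb * M%:Z - u * (k - c1 * ub).
    have -> : c1 * vb * M%:Z = c1 * (1 - ub * u) by rewrite e1; ring.
    ring.
  by apply: rpredB; [apply: dvdz_mull (dvdzz _) | apply: dvdz_mull].
Qed.

Lemma cusp_equiv_rep (N : nat) (R : nat -> seq int) (a c : int) : (0 < N)%N ->
  (forall f : nat, (0 < f)%N -> (f %| N)%N -> reps_ok N (gcdn f (N %/ f)) (R f)) ->
  coprimez a c ->
  exists f u, [/\ (0 < f)%N, (f %| N)%N, u \in R f & cusp_equiv N (1, u * f%:Z) (a, c)].
Proof.
move=> N0 HR cac; set f := gcdn `|c| N; set M := (N %/ f)%N.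
have f0 : (0 < f)%N by rewrite gcdn_gt0 N0 orbT.
have fN : (f %| N)%N by apply: dvdn_gcdr.
have fnz : f%:Z != 0 by rewrite eqz_nat -lt0n.
set c1 := (c %/ f%:Z)%Z.
have ec : c = c1 * f%:Z by rewrite divzK // dvdzE dvdn_gcdl.
have cc1 : coprimez c1 M%:Z.
  have h : gcdz c N%:Z = f%:Z by [].
  rewrite ec -(divnK fN) PoszM -mulz_gcdl in h.
  by apply/eqP/(mulIf fnz); rewrite mul1r.
have gM : ((gcdn f M)%:Z %| M%:Z)%Z by rewrite dvdz_nat dvdn_gcdr.
have cx : coprimez (c1 * a) (gcdn f M)%:Z.
  rewrite coprimezMl (coprimez_dvd cc1 gM) /=.
  by apply: (coprimez_dvd cac); rewrite ec dvdz_mull // dvdz_nat dvdn_gcdl.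
have [cuN _ hrep] := HR f f0 fN; have [u uR hu] := hrep _ cx.
exists f, u; split => //; rewrite ec; apply: cusp_equiv_of_congr; rewrite -?ec //.
- by apply: coprimez_dvdr (cuN u uR); apply: dvdn_div.
- by rewrite -eqz_mod_dvd.
Qed.

(** * Orthogonality *)

Section Sesquilinear.
Variables (V : lmodType algC) (ip : V -> V -> algC).
Hypothesis ip_linear : forall (a : algC) (u v w : V), ip (a *: u + v) w = a * ip u w + ip v w.
Hypothesis ip_antilinear :
  forall (a : algC) (u v w : V), ip w (a *: u + v) = a^* * ip w u + ip w v.

Lemma ip0l w : ip 0 w = 0.
Proof.
have := ip_linear 1 0 0 w; rewrite scaler0 addr0 mul1r => h.
by apply: (addrI (ip 0 w)); rewrite addr0 -h.
Qed.

Lemma ip0r w : ip w 0 = 0.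
Proof.
have := ip_antilinear 1 0 0 w; rewrite scaler0 addr0 rmorph1 mul1r => h.
by apply: (addrI (ip w 0)); rewrite addr0 -h.
Qed.

Lemma ipZl a u w : ip (a *: u) w = a * ip u w.
Proof. by have := ip_linear a u 0 w; rewrite addr0 ip0l addr0. Qed.

Lemma ipZr a u w : ip w (a *: u) = a^* * ip w u.
Proof. by have := ip_antilinear a u 0 w; rewrite addr0 ip0r addr0. Qed.

Lemma ipDl u v w : ip (u + v) w = ip u w + ip v w.
Proof. by have := ip_linear 1 u v w; rewrite scale1r mul1r. Qed.

Lemma ipDr u v w : ip w (u + v) = ip w u + ip w v.
Proof. by have := ip_antilinear 1 u v w; rewrite scale1r rmorph1 mul1r. Qed.

Lemma ip_suml (I : Type) (s : seq I) (F : I -> V) w :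
  ip (\sum_(i <- s) F i) w = \sum_(i <- s) ip (F i) w.
Proof.
elim: s => [|x s IH]; first by rewrite !big_nil ip0l.
by rewrite !big_cons ipDl IH.
Qed.

Lemma ip_sumr (I : Type) (s : seq I) (F : I -> V) w :
  ip w (\sum_(i <- s) F i) = \sum_(i <- s) ip w (F i).
Proof.
elim: s => [|x s IH]; first by rewrite !big_nil ip0r.
by rewrite !big_cons ipDr IH.
Qed.

Lemma ip_sum_scale (I J : Type) (s : seq I) (t : seq J) (c : I -> algC) (d : J -> algC)
    (F : I -> V) (G : J -> V) :
  ip (\sum_(i <- s) c i *: F i) (\sum_(j <- t) d j *: G j) =
  \sum_(i <- s) \sum_(j <- t) c i * (d j)^* * ip (F i) (G j).
Proof.
rewrite ip_suml; apply: eq_bigr => i _.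
rewrite ipZl ip_sumr big_distrr; apply: eq_bigr => j _.
by rewrite ipZr; exact: mulrA.
Qed.

Lemma ip_sum_orthonormal (I : eqType) (s : seq I) (c d : I -> algC) (F : I -> V) :
  uniq s -> (forall i, i \in s -> ip (F i) (F i) = 1) ->
  (forall i j, i \in s -> j \in s -> i != j -> ip (F i) (F j) = 0) ->
  ip (\sum_(i <- s) c i *: F i) (\sum_(j <- s) d j *: F j) = \sum_(i <- s) c i * (d i)^*.
Proof.
move=> us h1 h0; rewrite ip_sum_scale big_seq_cond [RHS]big_seq_cond.
apply: eq_bigr => i /andP [hi _].
rewrite (bigD1_seq i) //= h1 // mulr1 big_seq_cond big1 ?addr0 // => j /andP [hj hji].
by rewrite h0 ?mulr0 // eq_sym.
Qed.

End Sesquilinear.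

Lemma uniq_map_inj (T1 T2 : eqType) (h : T1 -> T2) (s : seq T1) :
  uniq (map h s) -> {in s &, injective h}.
Proof.
elim: s => //= x s IH /andP [hx hu] u v; rewrite !in_cons.
case/orP => [/eqP ->|us]; case/orP => [/eqP ->|vs] // e.
- by move: hx; rewrite e map_f.
- by move: hx; rewrite -e map_f.
- exact: IH.
Qed.

(* Multiplication by w permutes the representatives modulo g, so the sum is
   invariant under multiplication by h w != 1. *)
Lemma reps_sum_eq0 (N g : nat) (s : seq int) (h : int -> algC) (w : int) :
  (g %| N)%N -> reps_ok N g s -> {morph h : m n / m * n} ->
  (forall m n, coprimez m N%:Z -> coprimez n N%:Z -> (g%:Z %| m - n)%Z -> h m = h n) ->
  coprimez w N%:Z -> h w != 1 -> \sum_(u <- s) h u = 0.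
Proof.
move=> gN [cs us hex] hM hper cw hw.
pose pi u := nth 0 s (find (fun u' => (u' == w * u %[mod g%:Z])%Z) s).
have hpi u : u \in s -> pi u \in s /\ (g%:Z %| pi u - w * u)%Z.
  move=> us0; have cwu : coprimez (w * u) g%:Z.
    by rewrite coprimezMl (coprimez_dvdr gN cw) (coprimez_dvdr gN (cs _ us0)).
  have hh : has (fun u' => (u' == w * u %[mod g%:Z])%Z) s.
    by have [u' u's hu'] := hex _ cwu; apply/hasP; exists u'.
  split; first by rewrite /pi mem_nth // -has_find.
  by have := nth_find 0 hh; rewrite eqz_mod_dvd.
have inj : {in s &, injective pi}.
  move=> u v hu hv e; apply: (uniq_map_inj us hu hv); apply/eqP; rewrite eqz_mod_dvd.
  have [_ d1] := hpi u hu; have [_ d2] := hpi v hv; rewrite e in d1.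
  have : (g%:Z %| w * (u - v))%Z.
    have -> : w * (u - v) = (pi v - w * v) - (pi v - w * u) by ring.
    exact: rpredB.
  by rewrite Gauss_dvdzr // coprimez_sym (coprimez_dvdr gN).
have us' : uniq s by apply: map_uniq us.
have hperm : perm_eq (map pi s) s.
  have hu1 : uniq (map pi s) by rewrite map_inj_in_uniq.
  have hsub : {subset map pi s <= s} by move=> x /mapP [u hu ->]; have [] := hpi u hu.
  apply: uniq_perm => //; apply: (uniq_min_size hu1 hsub _).2.
  by rewrite size_map.
set S := \sum_(u <- s) _.
have eS : S = h w * S.
  rewrite {1}/S -(perm_big _ hperm) big_map /S big_distrr /= !big_seq.
  apply: eq_bigr => u hu; have [pin hd] := hpi u hu.
  by rewrite -hM; apply: hper; rewrite ?coprimezMl ?cw ?cs.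
apply/eqP; move: eS => /eqP.
by rewrite -subr_eq0 -{1}[S]mul1r -mulrBl mulf_eq0 subr_eq0 eq_sym (negbTE hw).
Qed.

Lemma dvdn_mul_divn (N f q1 q2 : nat) :
  (f %| N)%N -> (q1 %| N %/ f)%N -> (q2 %| f)%N -> (q1 * q2 %| N)%N.
Proof. by move=> fN h1 h2; rewrite -(divnK fN) dvdn_mul. Qed.

Lemma sim_char_mul_conjC (N q1 q2 : nat) c1 c2 psi n : (q1 * q2 %| N)%N ->
  sim_char q1 q2 N c1 c2 psi -> coprimez n N%:Z -> c1 n * (c2 n)^* = psi n.
Proof.
move=> qN [q0 [chi0 [_ hi1 hi2]]] cn.
by rewrite hi2 // -hi1 //; apply: coprimez_dvdr cn.
Qed.

Section AdmissiblePair.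
Variables (N f : nat) (psi : int -> algC).
Variables (q1 q2 q1' q2' : nat) (c1 c2 c1' c2' : int -> algC).
Hypotheses (N0 : (0 < N)%N) (fN : (f %| N)%N).
Hypotheses (h1 : (q1 %| N %/ f)%N) (h2 : (q2 %| f)%N) (p1 : primitive_dchar q1 c1)
  (p2 : primitive_dchar q2 c2) (sm : sim_char q1 q2 N c1 c2 psi).
Hypotheses (h1' : (q1' %| N %/ f)%N) (h2' : (q2' %| f)%N) (p1' : primitive_dchar q1' c1')
  (p2' : primitive_dchar q2' c2') (sm' : sim_char q1' q2' N c1' c2' psi).

Let MN : (N %/ f %| N)%N. Proof. exact: dvdn_div. Qed.
Let q1N : (q1 %| N)%N. Proof. exact: dvdn_trans h1 MN. Qed.
Let q1'N : (q1' %| N)%N. Proof. exact: dvdn_trans h1' MN. Qed.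
Let q2N : (q2 %| N)%N. Proof. exact: dvdn_trans h2 fN. Qed.
Let q2'N : (q2' %| N)%N. Proof. exact: dvdn_trans h2' fN. Qed.

Local Notation ratio n := (c1 n * (c1' n)^*).

Lemma ratioM m n : ratio (m * n) = ratio m * ratio n.
Proof. by rewrite (dcharM p1.1) (dcharM p1'.1) rmorphM; ring. Qed.

(* Both pairs induce psi, so the ratio can be read off either component. *)
Lemma ratio_second n : coprimez n N%:Z -> ratio n = c2 n * (c2' n)^*.
Proof.
move=> cn.
have e := sim_char_mul_conjC (dvdn_mul_divn fN h1 h2) sm cn.
have e' := sim_char_mul_conjC (dvdn_mul_divn fN h1' h2') sm' cn.
have n2 := dchar_mul_conj1_dvd N0 q2N p2.1 cn.
have n1' := dchar_mul_conj1_dvd N0 q1'N p1'.1 cn.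
rewrite -[LHS]mulr1 -n2.
have -> : c1 n * (c1' n)^* * (c2 n * (c2 n)^*) = (c1 n * (c2 n)^*) * (c1' n)^* * c2 n by ring.
rewrite e -e'.
have -> : c1' n * (c2' n)^* * (c1' n)^* * c2 n = (c1' n * (c1' n)^*) * (c2 n * (c2' n)^*) by ring.
by rewrite n1' mul1r.
Qed.

Lemma ratio_eqmod m n : coprimez m N%:Z -> coprimez n N%:Z ->
  ((gcdn f (N %/ f))%:Z %| m - n)%Z -> ratio m = ratio n.
Proof.
move=> cm cn hmn.
have hg : (gcdz (N %/ f)%N%:Z f%:Z %| m - n)%Z by rewrite /gcdz /= gcdnC.
have [k [hk1 hk2]] := chinese_gcdz hg.
have ck : coprimez k N%:Z.
  rewrite -(divnK fN) PoszM coprimezMr.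
  by rewrite (coprimez_congr (coprimez_dvdr MN cm)) ?(coprimez_congr (coprimez_dvdr fN cn))
    // -opprB rpredN.
have dvdM q : (q %| N %/ f)%N -> (q%:Z %| m - k)%Z.
  by move=> qM; rewrite -opprB rpredN; apply: dvdz_trans hk1; rewrite dvdz_nat.
have dvdf q : (q %| f)%N -> (q%:Z %| k - n)%Z.
  by move=> qf; apply: dvdz_trans hk2; rewrite dvdz_nat.
rewrite (dchar_eqmod p1.1 (dvdM _ h1)) (dchar_eqmod p1'.1 (dvdM _ h1')).
rewrite !ratio_second //.
by rewrite (dchar_eqmod p2.1 (dvdf _ h2)) (dchar_eqmod p2'.1 (dvdf _ h2')).
Qed.

Lemma ratio_trivial : (forall n, coprimez n N%:Z -> ratio n = 1) -> c1 =1 c1' /\ c2 =1 c2'.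
Proof.
move=> triv.
have e1 n : coprimez n N%:Z -> c1 n = c1' n.
  move=> cn; have n1' := dchar_mul_conj1_dvd N0 q1'N p1'.1 cn.
  by rewrite -[RHS]mul1r -(triv n cn) -mulrA [_^* * _]mulrC n1' mulr1.
have [_ E1] := primitive_dchar_unique N0 q1N q1'N p1 p1' e1.
split => //; have e2 n : coprimez n N%:Z -> c2 n = c2' n.
  move=> cn; have nz : c1 n != 0 := dchar_neq0_dvd q1N p1.1 cn.
  have e := sim_char_mul_conjC (dvdn_mul_divn fN h1 h2) sm cn.
  have e' := sim_char_mul_conjC (dvdn_mul_divn fN h1' h2') sm' cn.
  rewrite -e' -E1 in e.
  by have /(congr1 (fun x => x^*)) := mulfI nz e; rewrite !conjCK.
by have [_ E2] := primitive_dchar_unique N0 q2N q2'N p2 p2' e2.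
Qed.

Lemma admissible_pair_orth (s : seq int) : reps_ok N (gcdn f (N %/ f)) s ->
  (c1 =1 c1' /\ c2 =1 c2') \/ \sum_(u <- s) c1 (- u) * (c1' (- u))^* = 0.
Proof.
move=> hs; have [triv|] := classic (forall n, coprimez n N%:Z -> ratio n = 1).
  by left; apply: ratio_trivial.
move=> ntriv; right.
have [w cw hw] : exists2 w, coprimez w N%:Z & ratio w != 1.
  apply: NNPP => hn; apply: ntriv => n cn; apply: NNPP => hn1.
  by apply: hn; exists n => //; apply/eqP.
have gN : (gcdn f (N %/ f) %| N)%N by apply: dvdn_trans (dvdn_gcdl _ _) fN.
under eq_bigr do rewrite -mulN1r ratioM.
rewrite -big_distrr /= (reps_sum_eq0 gN hs ratioM _ cw hw) ?mulr0 //.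
by move=> m n cm cn; apply: ratio_eqmod.
Qed.

End AdmissiblePair.

(** * Completeness *)

Section UnitsZpCharacters.
Variable g : nat.
Hypothesis g1 : (1 < g)%N.

Lemma Zp_intE (z : int) : (z%:~R : 'Z_g) = (-1) ^+ (z < 0)%R * (`|z|%N%:R : 'Z_g).
Proof. by rewrite {1}[z]intEsign intrM rmorph_sign. Qed.

Lemma Zp_int_unit (z : int) : coprimez z g%:Z -> (z%:~R : 'Z_g) \is a GRing.unit.
Proof.
move=> cz; rewrite Zp_intE unitrMl ?unitrX ?unitrN1 // unitZpE //.
by rewrite coprime_sym; move: cz; rewrite coprimezE.
Qed.

Lemma Zp_int_eq (x y : int) : ((x%:~R : 'Z_g) == y%:~R) = (g%:Z %| x - y)%Z.
Proof.
rewrite -subr_eq0 -intrB Zp_intE mulrI_eq0; last exact/mulrI/unitrX/unitrN1.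
rewrite dvdzE /= /dvdn; apply/eqP/eqP => [h|h].
- by have := val_Zp_nat g1 `|x - y|%N; rewrite h.
- by apply: val_inj; rewrite /= val_Zp_nat // h.
Qed.

(* Junk value 1 for integers not coprime to g. *)
Definition Zp_unit_of (z : int) : {unit 'Z_g} := insubd (1%g : {unit 'Z_g}) (z%:~R : 'Z_g).

Lemma Zp_unit_ofK z : coprimez z g%:Z -> val (Zp_unit_of z) = z%:~R.
Proof. by move=> cz; rewrite /Zp_unit_of insubdK // Zp_int_unit. Qed.

Lemma Zp_unit_ofM x y : coprimez x g%:Z -> coprimez y g%:Z ->
  Zp_unit_of (x * y) = (Zp_unit_of x * Zp_unit_of y)%g.
Proof.
move=> cx cy; apply: val_inj.
by rewrite Zp_unit_ofK ?coprimezMl ?cx ?cy //= !Zp_unit_ofK // intrM.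
Qed.

Lemma eq_Zp_unit_of x y : coprimez x g%:Z -> coprimez y g%:Z ->
  (Zp_unit_of x == Zp_unit_of y) = (g%:Z %| x - y)%Z.
Proof. by move=> cx cy; rewrite -Zp_int_eq -!Zp_unit_ofK. Qed.

Local Notation G := (units_Zp g).

Definition Zp_dchar (i : Iirr G) (z : int) : algC :=
  if coprimez z g%:Z then 'chi_i (Zp_unit_of z) else 0.

Lemma Zp_dcharP i : is_dchar g (Zp_dchar i).
Proof.
have lin : 'chi[G]_i \is a linear_char by move/char_abelianP: (units_Zp_abelian g); apply.
have inG u : u \in G by rewrite inE.
split.
- rewrite /Zp_dchar coprimez1.
  have -> : Zp_unit_of 1 = 1%g by apply: val_inj; rewrite Zp_unit_ofK ?coprimez1.
  exact: lin_char1.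
- move=> m n; rewrite /Zp_dchar coprimezMl.
  case cm: (coprimez m g%:Z); case cn: (coprimez n g%:Z) => /=; rewrite ?mul0r ?mulr0 //.
  by rewrite Zp_unit_ofM // (lin_charM lin).
- move=> n; rewrite /Zp_dchar coprimezDr; case cn: (coprimez n g%:Z) => //.
  congr ('chi_i _); apply/eqP; rewrite eq_Zp_unit_of ?coprimezDr //.
  by rewrite addrAC subrr add0r dvdzz.
- move=> n; rewrite /Zp_dchar; case: (coprimez n g%:Z); last by rewrite eqxx.
  exact: lin_char_neq0.
Qed.

Lemma Zp_dchar_orthogonality x y : coprimez x g%:Z -> coprimez y g%:Z ->
  \sum_i Zp_dchar i x * (Zp_dchar i y)^* =
    if (g%:Z %| x - y)%Z then #|'C_G[Zp_unit_of x]|%g%:R else 0.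
Proof.
move=> cx cy; rewrite /Zp_dchar cx cy second_orthogonality_relation ?inE //.
have -> : (Zp_unit_of y ^: units_Zp_group g)%g = [set Zp_unit_of y].
  by move/abelian_classP: (units_Zp_abelian g); apply; rewrite inE.
by rewrite inE eq_Zp_unit_of //; case: ifP.
Qed.

End UnitsZpCharacters.

(* 'Z_1 is Z/2Z, so g = 1 is treated separately, with the family {1}. *)
Lemma dchar_orthogonal_family (g : nat) : (0 < g)%N ->
  exists (n : nat) (th : 'I_n -> int -> algC),
  [/\ forall i, is_dchar g (th i),
      forall x y, coprimez x g%:Z -> coprimez y g%:Z -> ~~ (g%:Z %| x - y)%Z ->
        \sum_(i < n) th i x * (th i y)^* = 0 &
      forall x, coprimez x g%:Z -> \sum_(i < n) th i x * (th i x)^* != 0].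
Proof.
move=> g0; have [g1|] := ltnP 1 g.
  exists (Nirr (units_Zp g)), (@Zp_dchar g); split; first exact: Zp_dcharP.
    by move=> x y cx cy hxy; rewrite Zp_dchar_orthogonality // (negbTE hxy).
  move=> x cx; rewrite Zp_dchar_orthogonality // subrr dvdz0 pnatr_eq0 -lt0n.
  exact: cardG_gt0.
rewrite leq_eqVlt ltnS leqn0 (gtn_eqF g0) orbF => /eqP ->.
exists 1%N, (fun _ _ => 1); split.
- by move=> _; split=> // [m n|n]; rewrite ?mulr1 // /coprimez gcdz1 oner_neq0.
- by move=> x y _ _; rewrite dvd1z.
- by move=> x _; rewrite big_ord1 conjC1 mulr1 oner_neq0.
Qed.

Lemma conductor_split (N f Nstar : nat) : (0 < N)%N -> (f %| N)%N -> (Nstar %| N)%N ->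
  (gcdn f (N %/ f) %| N %/ Nstar)%N ->
  exists a b : nat, [/\ (a * b)%N = Nstar, coprime a b, (a %| N %/ f)%N & (b %| f)%N].
Proof.
move=> N0 fN sN hg; set M := (N %/ f)%N.
have f0 := dvdn_gt0 N0 fN; have s0 := dvdn_gt0 N0 sN.
have eN : (f * M)%N = N by rewrite /M mulnC divnK.
have M0 : (0 < M)%N by move: N0; rewrite -eN muln_gt0 => /andP [].
pose pi : nat_pred := [pred p | logn p Nstar <= logn p M]%N.
exists (Nstar`_pi)%N, (Nstar`_pi^')%N; split; [exact: partnC | exact: coprime_partC | |].
- apply/dvdn_partP => [|p]; first exact: part_gt0.
  rewrite pi_of_part // inE => /andP [pN ppi].
  have pp : prime p by move: pN; rewrite mem_primes => /andP [].
  rewrite partn_part; last by move=> x; rewrite !inE => /eqP ->.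
  by rewrite p_part pfactor_dvdn.
- apply/dvdn_partP => [|p]; first exact: part_gt0.
  rewrite pi_of_part // inE => /andP [pN ppi].
  have pp : prime p by move: pN; rewrite mem_primes => /andP [].
  rewrite partn_part; last by move=> x; rewrite !inE => /eqP ->.
  rewrite p_part pfactor_dvdn //; move: ppi; rewrite !inE /= -ltnNge => hlt.
  have sd : (0 < N %/ Nstar)%N by rewrite divn_gt0 // dvdn_leq.
  have := dvdn_leq_log p sd hg.
  have eL : logn p N = (logn p f + logn p M)%N by rewrite -{1}eN lognM.
  rewrite logn_gcd // (logn_div p sN) eL.
  by have := dvdn_leq_log p N0 sN; rewrite eL -/M; lia.
Qed.

(* With e = 1 mod a and e = 0 mod b, n * e + (1 - e) is the integer that is
   n mod a and 1 mod b. *)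
Lemma dchar_component (a b : nat) (chi : int -> algC) (e : int) :
  is_dchar (a * b) chi -> (a%:Z %| e - 1)%Z -> (b%:Z %| e)%Z ->
  is_dchar a (fun n => chi (n * e + (1 - e))).
Proof.
move=> hc ha hb.
have hab : ((a * b)%N%:Z %| (e - 1) * e)%Z by rewrite PoszM dvdz_mul.
have cmod n : coprimez (n * e + (1 - e)) (a * b)%N%:Z = coprimez n a%:Z.
  rewrite PoszM coprimezMr; have -> : coprimez (n * e + (1 - e)) b%:Z.
    apply: coprimez_eqmod1.
    have -> : n * e + (1 - e) - 1 = (n - 1) * e by ring.
    exact: dvdz_mull.
  rewrite andbT; apply/idP/idP => h; apply: (coprimez_congr h).
  - have -> : n * e + (1 - e) - n = (n - 1) * (e - 1) by ring.
    exact: dvdz_mull.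
  - have -> : n - (n * e + (1 - e)) = (1 - n) * (e - 1) by ring.
    exact: dvdz_mull.
split.
- by rewrite mul1r addrC subrK (dchar1 hc).
- move=> m n; rewrite -(dcharM hc); apply: (dchar_eqmod hc).
  have -> : m * n * e + (1 - e) - (m * e + (1 - e)) * (n * e + (1 - e)) =
    ((e - 1) * e) * (m + n - m * n - 1) by ring.
  exact: dvdz_mulr.
- move=> n; apply: (dchar_eqmod hc).
  have -> : (n + a%:Z) * e + (1 - e) - (n * e + (1 - e)) = a%:Z * e by ring.
  by rewrite PoszM dvdz_mul.
- by move=> n; rewrite (dchar_neq0 hc) cmod.
Qed.

Lemma dchar_split (a b : nat) chi : coprime a b -> is_dchar (a * b) chi ->
  exists al be : int -> algC, [/\ is_dchar a al, is_dchar b be &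
    forall n, al n * (be n)^* = chi n].
Proof.
move=> cab hc; have /coprimezP [[x y] /= hxy] : coprimez a%:Z b%:Z by rewrite coprimezE.
pose e := y * b%:Z.
have ea : (a%:Z %| e - 1)%Z.
  have -> : e - 1 = (- x) * a%:Z by rewrite /e -hxy; ring.
  exact: dvdz_mull.
have eb : (b%:Z %| e)%Z by rewrite dvdz_mull.
have hc' : is_dchar (b * a) chi by rewrite mulnC.
have ea' : (b%:Z %| (1 - e) - 1)%Z by rewrite addrAC subrr add0r rpredN.
have eb' : (a%:Z %| 1 - e)%Z by rewrite -opprB rpredN.
exists (fun n => chi (n * e + (1 - e))).
exists (fun n => (chi (n * (1 - e) + (1 - (1 - e))))^*); split.
- exact: (dchar_component hc ea eb).
- exact/dchar_conjC/(dchar_component hc' ea' eb').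
- move=> n; rewrite conjCK -(dcharM hc); apply: (dchar_eqmod hc).
  have -> : (n * e + (1 - e)) * (n * (1 - e) + (1 - (1 - e))) - n =
    - (((e - 1) * e) * (n - 1) ^+ 2) by ring.
  by rewrite rpredN dvdz_mulr // PoszM dvdz_mul.
Qed.

(* chi1 and chi2 are the primitive characters behind th * al (mod N/f) and
   th * be (mod f); the twist by th cancels in chi1 * conj chi2. *)
Lemma admissible_twist (N Nstar f a b : nat) (psi chistar th al be : int -> algC) :
  (0 < N)%N -> (f %| N)%N -> (Nstar %| N)%N -> (gcdn f (N %/ f) %| N %/ Nstar)%N ->
  primitive_dchar Nstar chistar -> induced_by N psi chistar ->
  (a %| N %/ f)%N -> (b %| f)%N -> is_dchar (gcdn f (N %/ f)) th ->
  is_dchar a al -> is_dchar b be -> (forall n, al n * (be n)^* = chistar n) ->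
  exists chi1 chi2, admissible N Nstar psi (f, chi1, chi2) /\
    forall n, coprimez n N%:Z -> chi1 n = th n * al n.
Proof.
move=> N0 fN sN hg hstar hind aM bf hth hal hbe hab; set M := (N %/ f)%N.
have MN : (M %| N)%N by apply: dvdn_div.
have f0 := dvdn_gt0 N0 fN.
have gM : (gcdn f M %| M)%N by apply: dvdn_gcdr.
have gf : (gcdn f M %| f)%N by apply: dvdn_gcdl.
have [q1 [chi1 [q1M p1 e1]]] :=
  primitive_dchar_exists (dvdn_gt0 N0 MN) (dchar_mul_restrict hth hal gM aM).
have [q2 [chi2 [q2f p2 e2]]] :=
  primitive_dchar_exists f0 (dchar_mul_restrict hth hbe gf bf).
have E1 n : coprimez n N%:Z -> chi1 n = th n * al n.
  by move=> cn; rewrite e1 (coprimez_dvdr MN cn).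
have E2 n : coprimez n N%:Z -> chi2 n = th n * be n.
  by move=> cn; rewrite e2 (coprimez_dvdr fN cn).
exists chi1, chi2; split => //; split => //; exists q1, q2; split => //.
exists Nstar, chistar; split => //.
have qN : (q1 * q2 %| N)%N by apply: dvdn_mul_divn fN q1M q2f.
have [r [rho [rq prho e3]]] :=
  primitive_dchar_exists (dvdn_gt0 N0 qN) (dchar_mul_conjC p1.1 p2.1).
have agree n : coprimez n N%:Z -> rho n = chistar n.
  move=> cn; rewrite e3 ?(coprimez_dvdr qN cn) // E1 // E2 // rmorphM -hab.
  have nth : th n * (th n)^* = 1 by apply: (dchar_mul_conj1_dvd N0 (dvdn_trans gf fN) hth).
  by rewrite mulrACA nth mul1r.
have [_ eq] := primitive_dchar_unique N0 (dvdn_trans rq qN) sN prho hstar agree.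
by move=> n cn; rewrite -eq -e3.
Qed.

Lemma in_spanZ (V : lmodType algC) (S : V -> Prop) lam v :
  in_span S v -> in_span S (lam *: v).
Proof.
move=> [l [hl ->]]; exists [seq (lam * p.1, p.2) | p <- l]; split.
- by move=> p /mapP [q hq ->] /=; apply: hl.
- by rewrite big_map scaler_sumr; apply: eq_bigr => p _ /=; rewrite scalerA.
Qed.

Lemma in_span_sum (V : lmodType algC) (S : V -> Prop) n (c : 'I_n -> algC) (W : 'I_n -> V) :
  (forall i, S (W i)) -> in_span S (\sum_(i < n) c i *: W i).
Proof.
move=> hW; exists [seq (c i, W i) | i <- index_enum 'I_n]; split.
- by move=> p /mapP [i _ ->] /=; apply: hW.
- by rewrite big_map.
Qed.

(* Fourier inversion on (Z/gZ)^*: the index map x embeds s into the units. *)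
Lemma dchar_family_inversion (V : lmodType algC) (g n : nat) (th : 'I_n -> int -> algC)
    (x : int -> int) (a : int -> algC) (F : int -> V) (s : seq int) (u0 : int) :
  uniq s -> {in s, forall u, coprimez (x u) g%:Z} ->
  {in s &, forall u v, (g%:Z %| x u - x v)%Z -> u = v} ->
  (forall y z, coprimez y g%:Z -> coprimez z g%:Z -> ~~ (g%:Z %| y - z)%Z ->
     \sum_(i < n) th i y * (th i z)^* = 0) ->
  (forall y, coprimez y g%:Z -> \sum_(i < n) th i y * (th i y)^* != 0) ->
  u0 \in s -> a u0 != 0 ->
  F u0 = \sum_(i < n) ((th i (x u0))^* /
           ((\sum_(j < n) th j (x u0) * (th j (x u0))^*) * a u0)) *:
         \sum_(u <- s) (th i (x u) * a u) *: F u.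
Proof.
move=> us cs inj orth diag u0s a0; set K := \sum_(j < n) th j (x u0) * _.
have K0 : K != 0 by apply: diag; apply: cs.
under eq_bigr do rewrite scaler_sumr.
rewrite exchange_big /= (bigD1_seq u0) //= [X in _ + X]big1_seq ?addr0.
  under eq_bigr do rewrite scalerA; rewrite -scaler_suml.
  suff -> : \sum_(i < n) (th i (x u0))^* / (K * a u0) * (th i (x u0) * a u0) = 1.
    by rewrite scale1r.
  rewrite (eq_bigr (fun i => th i (x u0) * (th i (x u0))^* / K)) => [|i _].
    by rewrite -big_distrl /= divff.
  by field; apply/andP.
move=> u /andP [hne us']; under eq_bigr do rewrite scalerA; rewrite -scaler_suml.
rewrite (eq_bigr (fun i => th i (x u) * (th i (x u0))^* * (a u / (K * a u0)))) => [|i _];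
  last by field; apply/andP.
rewrite -big_distrl /= (orth _ _ (cs _ us') (cs _ u0s)) ?mul0r ?scale0r //.
by apply: contra hne => hd; apply/eqP; apply: inj.
Qed.

(** * The Eisenstein basis *)

Definition singular_level (N Nstar f : nat) : bool :=
  [&& (0 < f)%N, (f %| N)%N & (gcdn f (N %/ f) %| N %/ Nstar)%N].

Lemma admissible_level N Nstar psi f chi1 chi2 :
  admissible N Nstar psi (f, chi1, chi2) -> singular_level N Nstar f.
Proof. by case=> f0 fN hg _; apply/and3P. Qed.

Section EisensteinBasis.
Variables (N Nstar : nat) (psi chistar : int -> algC).
Hypotheses (N0 : (0 < N)%N) (psiP : is_dchar N psi) (sN : (Nstar %| N)%N).
Hypotheses (chistarP : primitive_dchar Nstar chistar) (ind : induced_by N psi chistar).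
Variables (V : lmodType algC) (E : int * int -> V) (ip : V -> V -> algC).
Hypothesis E_equiv : forall x y : int * int, coprimez x.1 x.2 -> coprimez y.1 y.2 ->
  singular_cusp N psi x -> cusp_equiv N x y -> exists lam : algC, E y = lam *: E x.
Hypothesis ip_linear : forall (a : algC) (u v w : V), ip (a *: u + v) w = a * ip u w + ip v w.
Hypothesis ip_antilinear :
  forall (a : algC) (u v w : V), ip w (a *: u + v) = a^* * ip w u + ip w v.
Hypothesis E_orth : forall x y : int * int, coprimez x.1 x.2 -> coprimez y.1 y.2 ->
  singular_cusp N psi x -> singular_cusp N psi y -> ~ cusp_equiv N x y -> ip (E x) (E y) = 0.
Hypothesis E_norm : forall x : int * int, coprimez x.1 x.2 -> singular_cusp N psi x ->
  ip (E x) (E x) = 1.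
Variable R : nat -> seq int.
Hypothesis R_reps : forall f : nat, (0 < f)%N -> (f %| N)%N ->
  reps_ok N (gcdn f (N %/ f)) (R f).

Local Notation level := (singular_level N Nstar).
Local Notation Ecusp f u := (E (1, u * f%:Z)).

Lemma reps_coprime f u : level f -> u \in R f -> coprimez u N%:Z.
Proof. by case/and3P=> f0 fN _; have [cs _ _] := R_reps f0 fN; apply: cs. Qed.

Lemma reps_eqmod f u v : level f -> u \in R f -> v \in R f ->
  ((gcdn f (N %/ f))%:Z %| v - u)%Z -> u = v.
Proof.
case/and3P=> f0 fN _ hu hv h; have [_ hun _] := R_reps f0 fN.
by apply: (uniq_map_inj hun hu hv); apply/eqP; rewrite eq_sym eqz_mod_dvd.
Qed.

Lemma reps_singular f u : level f -> u \in R f -> singular_cusp N psi (1, u * f%:Z).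
Proof.
move=> lf hu; case/and3P: (lf) => _ fN hg.
exact: singular_cusp_of_gcd_dvd N0 fN sN ind (reps_coprime lf hu) chistarP.1 hg.
Qed.

Lemma ip_Ecusp f f' u v : level f -> level f' -> u \in R f -> v \in R f' ->
  ip (Ecusp f u) (Ecusp f' v) = ((f == f') && (u == v))%:R.
Proof.
move=> lf lf' hu hv; case: (boolP ((f == f') && (u == v))) => [/andP [/eqP ef /eqP euv]|neq].
  by subst f' v; rewrite E_norm; [| apply: coprimez1 | apply: reps_singular].
apply: E_orth;
  [apply: coprimez1 | apply: coprimez1 | exact: reps_singular | exact: reps_singular |] => heq.
case/and3P: (lf) => _ fN _; case/and3P: (lf') => _ f'N _.
have [eff hd] := cusp_equiv_inv N0 fN f'N (reps_coprime lf hu) (reps_coprime lf' hv) heq.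
by subst f'; move: neq; rewrite eqxx (reps_eqmod lf hu hv hd) eqxx.
Qed.

Lemma ip_Dser_same_level f c1 c2 c1' c2' : level f ->
  ip (Dser E R (f, c1, c2)) (Dser E R (f, c1', c2')) =
    \sum_(u <- R f) c1 (- u) * (c1' (- u))^*.
Proof.
move=> lf; case/and3P: (lf) => f0 fN _; have [_ hun _] := R_reps f0 fN.
apply: ip_sum_orthonormal => //; first exact: map_uniq hun.
  by move=> u hu; rewrite ip_Ecusp // !eqxx.
by move=> u v hu hv huv; rewrite ip_Ecusp // eqxx (negbTE huv).
Qed.

Lemma ip_Dser_diff_level f f' c1 c2 c1' c2' : level f -> level f' -> f != f' ->
  ip (Dser E R (f, c1, c2)) (Dser E R (f', c1', c2')) = 0.
Proof.
move=> lf lf' neq; rewrite /Dser ip_sum_scale // big_seq big1 // => u hu.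
by rewrite big_seq big1 // => v hv; rewrite ip_Ecusp // (negbTE neq) mulr0.
Qed.

Lemma Dser_in_span x : admissible N Nstar psi x ->
  in_span (fun v => exists x, [/\ coprimez x.1 x.2, singular_cusp N psi x & v = E x])
    (Dser E R x).
Proof.
case: x => [[f c1] c2] /admissible_level lf.
exists [seq (c1 (- u), Ecusp f u) | u <- R f]; split; last by rewrite big_map.
move=> p /mapP [u hu ->] /=; exists (1, u * f%:Z).
by split; [apply: coprimez1 | apply: reps_singular |].
Qed.

Lemma Dser_orth x y : admissible N Nstar psi x -> admissible N Nstar psi y -> x <> y ->
  ip (Dser E R x) (Dser E R y) = 0.
Proof.
case: x y => [[f c1] c2] [[f' c1'] c2'] adm adm' neq.
have lf := admissible_level adm; have lf' := admissible_level adm'.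
have [eff|] := eqVneq f f'; last exact: ip_Dser_diff_level.
subst f'; rewrite ip_Dser_same_level //; case/and3P: lf => f0 fN _.
case: adm adm' => _ _ _ [q1 [q2 [h1 h2 p1 p2 sm]]] [_ _ _ [q1' [q2' [h1' h2' p1' p2' sm']]]].
have [[e1 e2]|//] := admissible_pair_orth N0 fN h1 h2 p1 p2 sm h1' h2' p1' p2' sm' (R_reps f0 fN).
by case: neq; congr (_, _, _); apply: functional_extensionality.
Qed.

Lemma Dser_norm_neq0 x : admissible N Nstar psi x -> ip (Dser E R x) (Dser E R x) != 0.
Proof.
case: x => [[f c1] c2] adm; have lf := admissible_level adm.
rewrite ip_Dser_same_level //; case/and3P: (lf) => f0 fN _.
case: adm => _ _ _ [q1 [q2 [h1 _ p1 _ _]]].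
have [_ hun hrep] := R_reps f0 fN; have [u0 u0R _] := hrep 1 (coprimez1 _).
have nz : c1 (- u0) != 0.
  apply: (dchar_neq0_dvd (dvdn_trans h1 (dvdn_div fN)) p1.1).
  by rewrite coprimeNz (reps_coprime lf u0R).
rewrite (bigD1_seq u0) ?(map_uniq hun) //=; apply: lt0r_neq0.
apply: (lt_le_trans (y := c1 (- u0) * (c1 (- u0))^*)); first by rewrite mul_conjC_gt0.
by rewrite lerDl sumr_ge0 // => i _; apply: mul_conjC_ge0.
Qed.

Local Notation Dfam := (fun v : V => exists x, admissible N Nstar psi x /\ v = Dser E R x).

(* Expand E_{1/(u0 f)} in the characters th of (Z/(f,N/f)Z)^*, twisted by the
   al-part of the splitting chistar = al * conj be along N/f and f. *)
Lemma Ecusp_in_span_Dser f u0 : level f -> u0 \in R f -> in_span Dfam (Ecusp f u0).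
Proof.
move=> lf u0R; case/and3P: (lf) => f0 fN hg; set g := gcdn f (N %/ f).
have [a [b [eab cab aM bf]]] := conductor_split N0 fN sN hg.
have hab_star : is_dchar (a * b) chistar by rewrite eab; case: chistarP.
have [al [be [hal hbe hab]]] := dchar_split cab hab_star.
have g0 : (0 < g)%N by rewrite gcdn_gt0 f0.
have [n [th [hth orth diag]]] := dchar_orthogonal_family g0.
have [_ hun _] := R_reps f0 fN.
have cg : {in R f, forall u, coprimez (- u) g%:Z}.
  move=> u hu; rewrite coprimeNz; apply: coprimez_dvdr (reps_coprime lf hu).
  exact: dvdn_trans (dvdn_gcdl _ _) fN.
have inj : {in R f &, forall u v, (g%:Z %| - u - - v)%Z -> u = v}.
  by move=> u v hu hv; rewrite opprK addrC; apply: reps_eqmod.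
have al0 : al (- u0) != 0.
  apply: (dchar_neq0_dvd (dvdn_trans aM (dvdn_div fN)) hal).
  by rewrite coprimeNz (reps_coprime lf u0R).
rewrite (dchar_family_inversion (x := fun u => - u) (a := fun u => al (- u))
  (fun u => Ecusp f u) (map_uniq hun) cg inj orth diag u0R al0).
apply: in_span_sum => i.
have [chi1 [chi2 [adm E1]]] := admissible_twist N0 fN sN hg chistarP ind aM bf (hth i) hal hbe hab.
exists (f, chi1, chi2); split => //.
by apply: eq_big_seq => u hu; rewrite E1 // coprimeNz (reps_coprime lf hu).
Qed.

Lemma singular_in_span_Dser x : coprimez x.1 x.2 -> singular_cusp N psi x ->
  in_span Dfam (E x).
Proof.
case: x => a c cac hsing.
have [f [u0 [f0 fN u0R heq]]] := cusp_equiv_rep N0 R_reps cac.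
have hs0 := singular_cusp_equiv psiP heq hsing.
have [cs _ _] := R_reps f0 fN.
have hg := gcd_dvd_of_singular_cusp N0 fN sN ind (cs _ u0R) psiP chistarP hs0.
have [lam ->] := E_equiv (x := (1, u0 * f%:Z)) (coprimez1 _) cac hs0 heq.
by apply/in_spanZ/Ecusp_in_span_Dser => //; apply/and3P.
Qed.

End EisensteinBasis.

Theorem theorem8p1
  (N Nstar : nat) (k : int) (psi chistar : int -> algC)
  (HN : (0 < N)%N)
  (Hpsi : is_dchar N psi)
  (Hpar : psi (-1) = (-1) ^ k)
  (HNstar : (Nstar %| N)%N)
  (Hchistar : primitive_dchar Nstar chistar)
  (Hind : induced_by N psi chistar)
  (* the formal space: Eisenstein series E_a = E (a, c) for the cusp a/c,
     together with the formal inner product (normalised by 1/(4 pi)) *)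
  (V : lmodType algC) (E : int * int -> V) (ip : V -> V -> algC)
  (Hip_l : forall (a : algC) (u v w : V), ip (a *: u + v) w = a * ip u w + ip v w)
  (Hip_r : forall (a : algC) (u v w : V), ip w (a *: u + v) = a^* * ip w u + ip w v)
  (HEequiv : forall x y : int * int, coprimez x.1 x.2 -> coprimez y.1 y.2 ->
     singular_cusp N psi x -> cusp_equiv N x y ->
     exists lam : algC, E y = lam *: E x)
  (HEorth : forall x y : int * int, coprimez x.1 x.2 -> coprimez y.1 y.2 ->
     singular_cusp N psi x -> singular_cusp N psi y -> ~ cusp_equiv N x y ->
     ip (E x) (E y) = 0)
  (HEnorm : forall x : int * int, coprimez x.1 x.2 -> singular_cusp N psi x ->
     ip (E x) (E x) = 1)
  (* choice of representatives u (coprime to N) of (Z/(f,N/f)Z)^* *)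
  (R : nat -> seq int)
  (HR : forall f : nat, (0 < f)%N -> (f %| N)%N ->
     reps_ok N (gcdn f (N %/ f)) (R f)) :
  let Sing := fun v : V => exists x : int * int,
      [/\ coprimez x.1 x.2, singular_cusp N psi x & v = E x] in
  let Dfam := fun v : V => exists x, admissible N Nstar psi x /\ v = Dser E R x in
  [/\ (forall x, admissible N Nstar psi x -> in_span Sing (Dser E R x)),
      (forall x y, admissible N Nstar psi x -> admissible N Nstar psi y ->
         x <> y -> ip (Dser E R x) (Dser E R y) = 0),
      (forall x, admissible N Nstar psi x -> ip (Dser E R x) (Dser E R x) != 0) &
      (forall v, Sing v -> in_span Dfam v)].
Proof.
move=> Sing Dfam; split.
- exact: (Dser_in_span HN HNstar Hchistar Hind E HR).
- exact: (Dser_orth HN HNstar Hchistar Hind Hip_l Hip_r HEorth HEnorm HR).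
- exact: (Dser_norm_neq0 HN HNstar Hchistar Hind Hip_l Hip_r HEorth HEnorm HR).
- move=> v [x [cx sx ->]].
  exact: (singular_in_span_Dser HN Hpsi HNstar Hchistar Hind HEequiv HR cx sx).
Qed.
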